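(* Let $f:2^N\to\mathbb R$ be monotone with $f(\emptyset)\ge0$, $|N|=n$ with $\sqrt n$ integer, and let $p$ be a polynomial and $\epsilon\ge f(N)/p(n)$. Given a sufficiently large polynomial number of samples $(S_j,f(S_j))$ with $S_j$ i.i.d. from $\mathcal D^{sub}$, with probability at least $1-O(e^{-n})$ the estimates $\hat v_i=\frac{1}{|\mathcal S_{i,\sqrt n+1}|}\sum_{S\in\mathcal S_{i,\sqrt n+1}}f(S)-\frac{1}{|\mathcal S_{-i,\sqrt n}|}\sum_{S\in\mathcal S_{-i,\sqrt n}}f(S)$ satisfy, for all $e_i\in N$, $\big|\hat v_i-\mathbb E_{S\sim\mathcal D_{\sqrt n}\mid e_i\notin S}[f_S(e_i)]\big|\le\epsilon$.
   Context: $N=\{e_1,\dots,e_n\}$, $f_S(e)=f(S\cup\{e\})-f(S)$. $\mathcal D_j$ is the uniform distribution over subsets of $N$ of size $j$; $\mathcal D^{sub}$ draws from $\mathcal D_k$, $\mathcal D_{\sqrt n}$, $\mathcal D_{\sqrt n+1}$ with probability $1/3$ each, for some $1\le k\le n$. $\mathcal S_{i,j}$ (resp. $\mathcal S_{-i,j}$) is the collection of samples of size $j$ containing (resp. not containing) $e_i$. *)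

From HB Require Import structures.
From mathcomp Require Import all_boot all_order all_algebra.
From mathcomp Require Import reals.
From mathcomp Require Import sequences exp.
Set Implicit Arguments. Unset Strict Implicit. Unset Printing Implicit Defensive.
Import Order.TTheory GRing.Theory Num.Theory.
Local Open Scope ring_scope.

Section Defs.
Variable R : realType.

Definition monotone_set n (f : {set 'I_n} -> R) : Prop :=
  forall S T : {set 'I_n}, S \subset T -> f S <= f T.

Definition unif_size n (j : nat) (S : {set 'I_n}) : R :=
  (#|S| == j)%:R / ('C(n, j))%:R.

(* D^sub with sqrt n = m: D_k, D_m, D_{m+1} each with probability 1/3 *)
Definition dsub n (m k : nat) (S : {set 'I_n}) : R :=
  3%:R^-1 * unif_size k S + 3%:R^-1 * unif_size m S
  + 3%:R^-1 * unif_size m.+1 S.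

(* probability of an event on M i.i.d. samples from D^sub (product measure) *)
Definition prob_samples n (m k M : nat)
    (E : pred {ffun 'I_M -> {set 'I_n}}) : R :=
  \sum_(s | E s) \prod_(j < M) dsub m k (s j).

(* estimate hat v_i; collections S_{i,j} are taken with multiplicity over the
   sample indices; an empty average is 0 (MathComp: x / 0 = 0) *)
Definition vhat n (m M : nat) (f : {set 'I_n} -> R)
    (s : {ffun 'I_M -> {set 'I_n}}) (i : 'I_n) : R :=
  (\sum_(j < M | (#|s j| == m.+1) && (i \in s j)) f (s j))
    / (#|[set j : 'I_M | (#|s j| == m.+1) && (i \in s j)]|)%:R
  - (\sum_(j < M | (#|s j| == m) && (i \notin s j)) f (s j))
    / (#|[set j : 'I_M | (#|s j| == m) && (i \notin s j)]|)%:R.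

Definition marg_exp n (m : nat) (f : {set 'I_n} -> R) (i : 'I_n) : R :=
  (\sum_(S : {set 'I_n} | (#|S| == m) && (i \notin S)) (f (i |: S) - f S))
    / (#|[set S : {set 'I_n} | (#|S| == m) && (i \notin S)]|)%:R.

End Defs.
Arguments unif_size {R n} j S.
Arguments dsub {R n} m k S.
Arguments prob_samples {R n} m k {M} E.

(* For each e_i the estimate is the difference of two empirical averages of f: over
   the samples of size sqrt n + 1 containing e_i, and over those of size sqrt n
   avoiding e_i.  D^sub is uniform on each of these two classes of sets and gives each
   of them mass at least 1/(3n), while S |-> S :|: {e_i} maps the second class
   bijectively onto the first, so the difference of the two population averages is
   exactly the expected marginal contribution of e_i.  Chernoff bounds for the number
   of samples in a class and for the centred sum of f over them make each empirical
   average (eps/2)-accurate outside an event of probability 3 exp(-2n), as soon as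
   M >= 2304 n^3 / rho^2 with rho = min(1, eps / f(N)) >= 1/p(n).  A union bound over
   the 2n averages and n exp(-2n) <= exp(-n) conclude. *)

From HB Require Import structures.
From mathcomp Require Import all_boot all_order all_algebra.
From mathcomp Require Import reals.
From mathcomp Require Import sequences exp.
From mathcomp Require Import ring lra.
Import Order.TTheory GRing.Theory Num.Theory.
Local Open Scope ring_scope.

Set Implicit Arguments. Unset Strict Implicit.

Lemma sum_pred_natr (R : pzSemiRingType) (I : finType) (Q : pred I) (g : I -> R) :
  \sum_(x | Q x) g x = \sum_x (Q x)%:R * g x.
Proof. by rewrite big_mkcond; apply: eq_bigr => x _; case: (Q x); rewrite ?mul1r ?mul0r. Qed.

Lemma card_set_natr (R : pzSemiRingType) (I : finType) (Q : pred I) :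
  #|[set x | Q x]|%:R = \sum_x (Q x)%:R :> R.
Proof.
by rewrite cardsE -sum1_card natr_sum sum_pred_natr; apply: eq_bigr => x _; rewrite mulr1.
Qed.

(* exp(y/2) (1 - y/2) <= 1, while (1 + y + 2 y^2) (1 - y/2)^2 >= 1 when y <= 1. *)
Lemma expR_le_quadratic (R : realType) (y : R) :
  y <= 1 -> expR y <= 1 + y + 2 * y ^+ 2.
Proof.
move=> y1.
have u0 := expR_gt0 (y / 2).
have u1 : expR (y / 2) * (1 - y / 2) <= 1.
  rewrite -[X in _ <= X](expRxMexpNx_1 (y / 2)); apply: ler_wpM2l; first exact: ltW.
  by have := expR_ge1Dx (- (y / 2)); lra.
have ->: expR y = expR (y / 2) ^+ 2 by rewrite expr2 -expRD; congr expR; field.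
have w2 : 0 < (1 - y / 2) ^+ 2 by apply: exprn_gt0; lra.
have q1 : 1 <= (1 + y + 2 * y ^+ 2) * (1 - y / 2) ^+ 2.
  have : 0 <= y ^+ 2 * (5 - 2 * y) * (1 - y) by apply: mulr_ge0; [apply: mulr_ge0; nra | lra].
  nra.
have : (expR (y / 2) * (1 - y / 2)) ^+ 2 <= 1.
  by rewrite expr_le1 //; apply: mulr_ge0; lra.
rewrite exprMn => h; rewrite -(ler_pM2r w2); exact: le_trans h q1.
Qed.

Section ProductMeasure.
Variables (R : realType) (T : finType) (P : T -> R) (M : nat).
Hypothesis P_ge0 : forall x, 0 <= P x.
Hypothesis P_sum1 : \sum_x P x = 1.

Definition Pr (E : pred {ffun 'I_M -> T}) : R :=
  \sum_(s | E s) \prod_(j < M) P (s j).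

Lemma prodP_ge0 (s : {ffun 'I_M -> T}) : 0 <= \prod_(j < M) P (s j).
Proof. by apply: prodr_ge0 => j _; apply: P_ge0. Qed.

Lemma PrE E : Pr E = \sum_s (E s)%:R * \prod_(j < M) P (s j).
Proof. exact: sum_pred_natr. Qed.

Lemma Pr_predT : Pr predT = 1.
Proof.
rewrite /Pr -(bigA_distr_bigA (fun (j : 'I_M) x => P x)) /=.
by rewrite big1 // => j _; apply: P_sum1.
Qed.

Lemma Pr_le (E F : pred {ffun 'I_M -> T}) :
  (forall s, E s -> F s) -> Pr E <= Pr F.
Proof.
move=> EF; rewrite !PrE; apply: ler_sum => s _.
apply: ler_wpM2r; first exact: prodP_ge0.
by case Es: (E s); rewrite ?(EF _ Es) ?ler_nat.
Qed.

Lemma Pr_predC E : Pr (predC E) = 1 - Pr E.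
Proof. by rewrite -Pr_predT /Pr (bigID E predT) /=; ring. Qed.

Lemma Pr_or E F : Pr (fun s => E s || F s) <= Pr E + Pr F.
Proof.
rewrite !PrE -big_split /=; apply: ler_sum => s _.
rewrite -mulrDl; apply: ler_wpM2r; first exact: prodP_ge0.
by rewrite -natrD ler_nat; case: (E s); case: (F s).
Qed.

Lemma Pr_exists (I : finType) (E : I -> pred {ffun 'I_M -> T}) :
  Pr (fun s => [exists i, E i s]) <= \sum_i Pr (E i).
Proof.
rewrite PrE (eq_bigr _ (fun i _ => PrE (E i))) exchange_big /=.
apply: ler_sum => s _; rewrite -big_distrl /=.
apply: ler_wpM2r; first exact: prodP_ge0.
case: existsP => [[i0 Ei0] | _]; last by apply: sumr_ge0 => i _.
rewrite (bigD1 i0) //= Ei0 lerDl; exact: sumr_ge0.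
Qed.

(* Exponential moment method: Markov's inequality for expR (lam * sum), which
   factorises over the independent coordinates, each factor being at most
   expR (2 lam^2) by [expR_le_quadratic]. *)
Lemma chernoff_bound (X : T -> R) (lam t : R) :
  (forall x, `|X x| <= 1) -> \sum_x P x * X x = 0 -> 0 <= lam <= 1 ->
  Pr (fun s => t <= \sum_(j < M) X (s j))
    <= expR (- (lam * t) + 2 * lam ^+ 2 * M%:R).
Proof.
move=> Xb X0 /andP[l0 l1].
pose weight (s : {ffun 'I_M -> T}) :=
  expR (lam * (\sum_(j < M) X (s j) - t)) * \prod_(j < M) P (s j).
have markov : Pr (fun s => t <= \sum_(j < M) X (s j)) <= \sum_s weight s.
  rewrite PrE /weight; apply: ler_sum => s _; apply: ler_wpM2r; first exact: prodP_ge0.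
  case: (lerP t (\sum_(j < M) X (s j))) => h /=; last exact: expR_ge0.
  apply: le_trans (expR_ge1Dx _); rewrite lerDl; apply: mulr_ge0 => //; lra.
have factor :
    \sum_s weight s = expR (- (lam * t)) * (\sum_x P x * expR (lam * X x)) ^+ M.
  rewrite /weight -[M in RHS]card_ord -prodr_const.
  rewrite (bigA_distr_bigA (fun (j : 'I_M) x => P x * expR (lam * X x))) /=.
  rewrite big_distrr /=; apply: eq_bigr => s _.
  rewrite big_split /= mulrCA [LHS]mulrC; congr (_ * _).
  by rewrite -expR_sum -expRD; congr expR; rewrite mulrBr mulr_sumr; ring.
have moment : \sum_x P x * expR (lam * X x) <= expR (2 * lam ^+ 2).
  apply: le_trans (expR_ge1Dx _).
  apply: le_trans (_ : _ <= \sum_x P x * (1 + lam * X x + 2 * lam ^+ 2)) _.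
    apply: ler_sum => x _; apply: ler_wpM2l => //.
    have /andP[Xl Xu] : -1 <= X x <= 1 by rewrite -ler_norml.
    apply: le_trans (expR_le_quadratic _) _; first by nra.
    rewrite lerD2l ler_wpM2l // exprMn ler_piMr ?exprn_ge0 //.
    by rewrite -real_normK ?num_real // expr_le1.
  rewrite (eq_bigr (fun x => P x + lam * (P x * X x) + 2 * lam ^+ 2 * P x)); last first.
    by move=> x _; ring.
  by rewrite !big_split /= -!mulr_sumr X0 P_sum1 mulr0 addr0 mulr1.
apply: le_trans markov _; rewrite factor expRD.
apply: ler_wpM2l; first exact: expR_ge0.
rewrite mulrC expRM_natl; apply: lerXn2r; rewrite ?nnegrE ?expR_ge0 //.
by apply: sumr_ge0 => x _; apply: mulr_ge0 => //; apply: expR_ge0.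
Qed.

End ProductMeasure.

Section ClassAverage.
Variables (R : realType) (T : finType) (P : T -> R) (M : nat).
Hypothesis P_ge0 : forall x, 0 <= P x.
Hypothesis P_sum1 : \sum_x P x = 1.
Variables (C : pred T) (f : T -> R) (F rho : R).
Hypothesis P_const : forall x y, C x -> C y -> P x = P y.
Hypothesis C_nonempty : (0 < #|[set x | C x]|)%N.
Hypothesis f_bounded : forall x, 0 <= f x <= F.
Hypothesis F_gt0 : 0 < F.
Hypothesis rho_gt0 : 0 < rho.
Hypothesis rho_le1 : rho <= 1.

Let q := \sum_(x | C x) P x.
Let a := (\sum_(x | C x) f x) / #|[set x | C x]|%:R.
Let centred x := (f x - a) * (C x)%:R / F.

Let few_samples (s : {ffun 'I_M -> T}) := q * M%:R / 2 <= \sum_(j < M) (q - (C (s j))%:R).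
Let sum_too_high (s : {ffun 'I_M -> T}) := rho * q * M%:R / 4 <= \sum_(j < M) centred (s j).
Let sum_too_low (s : {ffun 'I_M -> T}) := rho * q * M%:R / 4 <= \sum_(j < M) - centred (s j).

Lemma class_mass_ge0 : 0 <= q.
Proof. exact: sumr_ge0. Qed.

Lemma class_mass_le1 : q <= 1.
Proof. by rewrite -P_sum1 [X in _ <= X](bigID C) /= lerDl; apply: sumr_ge0. Qed.

Lemma class_average_bounds : 0 <= a <= F.
Proof.
have c0 : 0 < #|[set x | C x]|%:R :> R by rewrite ltr0n.
apply/andP; split.
  by apply: divr_ge0; [apply: sumr_ge0 => x _; case/andP: (f_bounded x) | exact: ltW].
rewrite ler_pdivrMr // card_set_natr mulr_sumr (sum_pred_natr C).
apply: ler_sum => x _; case: (C x); rewrite ?mulr1 ?mul1r ?mulr0 ?mul0r //.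
by case/andP: (f_bounded x).
Qed.

Lemma centred_bound x : `|centred x| <= 1.
Proof.
rewrite /centred normrM normfV (gtr0_norm F_gt0) ler_pdivrMr // mul1r normrM.
case/andP: class_average_bounds => a0 aF; case/andP: (f_bounded x) => f0 fF.
case: (C x); rewrite ?normr1 ?mulr1 ?normr0 ?mulr0; last exact: ltW.
by rewrite ler_norml; apply/andP; split; lra.
Qed.

Lemma centred_mean : \sum_x P x * centred x = 0.
Proof.
have [x0 Cx0] : exists x0, C x0.
  by move: C_nonempty; rewrite card_gt0 => /set0Pn [x0]; rewrite inE; exists x0.
have c0 : #|[set x | C x]|%:R != 0 :> R by rewrite pnatr_eq0 -lt0n.
rewrite (eq_bigr (fun x => P x0 / F * ((C x)%:R * f x - (C x)%:R * a))); last first.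
  move=> x _; rewrite /centred; case Cx: (C x); last by rewrite !(mulr0, mul0r, subrr).
  by rewrite (P_const Cx Cx0); field; apply: lt0r_neq0.
rewrite -mulr_sumr sumrB -sum_pred_natr -mulr_suml -card_set_natr /a [_ * (_ / _)]mulrC.
by rewrite divfK // subrr mulr0.
Qed.

Lemma class_average_close (s : {ffun 'I_M -> T}) :
  ~~ few_samples s -> ~~ sum_too_high s -> ~~ sum_too_low s ->
  `|(\sum_(j < M | C (s j)) f (s j)) / #|[set j | C (s j)]|%:R - a| <= rho * F / 2.
Proof.
rewrite /few_samples /sum_too_high /sum_too_low -!ltNge => h1 h2 h3.
have q0 := class_mass_ge0.
rewrite card_set_natr.
set N := \sum_(j < M) (C (s j))%:R.
set A := \sum_(j < M | C (s j)) f (s j).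
have eD : \sum_(j < M) centred (s j) = (A - a * N) / F.
  rewrite /centred -mulr_suml; congr (_ / _).
  rewrite (eq_bigr (fun j => (C (s j))%:R * f (s j) - a * (C (s j))%:R)); last first.
    by move=> j _; ring.
  by rewrite sumrB -mulr_sumr /A (sum_pred_natr (fun j => C (s j))).
have eN : \sum_(j < M) (q - (C (s j))%:R) = q * M%:R - N.
  by rewrite sumrB sumr_const card_ord mulr_natr.
rewrite eN in h1; rewrite eD in h2; rewrite sumrN eD in h3.
have qM0 : 0 <= q * M%:R by apply: mulr_ge0 => //; apply: ler0n.
have N0 : 0 < N by lra.
set D := (A - a * N) / F in h2 h3.
have -> : A / N - a = F * D / N by rewrite /D; field; apply/andP; split; apply: lt0r_neq0.
rewrite normrM normfV (gtr0_norm N0) normrM (gtr0_norm F_gt0) ler_pdivrMr //.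
have hD : `|D| <= rho * q * M%:R / 4 by rewrite ler_norml; apply/andP; split; lra.
have hFD : F * `|D| <= F * (rho * q * M%:R / 4) by apply: ler_wpM2l => //; apply: ltW.
have hN : rho * F * (q * M%:R) <= rho * F * (2 * N).
  by apply: ler_wpM2l; [apply: mulr_ge0; apply: ltW | lra].
nra.
Qed.

Lemma Pr_class_average_far :
  Pr P (fun s => rho * F / 2 <
    `|(\sum_(j < M | C (s j)) f (s j)) / #|[set j | C (s j)]|%:R - a|)
  <= 3 * expR (- (rho ^+ 2 * q ^+ 2 * M%:R / 128)).
Proof.
have q0 := class_mass_ge0; have q1 := class_mass_le1.
have rq1 : rho * q <= 1 by rewrite -[1]mulr1; apply: ler_pM => //; apply: ltW.
have rq0 : 0 <= rho * q by apply: mulr_ge0 => //; apply: ltW.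
set bound := expR (- (rho ^+ 2 * q ^+ 2 * M%:R / 128)).
have Pfew : Pr P few_samples <= bound.
  apply: le_trans (chernoff_bound M P_ge0 P_sum1 (X := fun x => q - (C x)%:R)
    (lam := q / 8) (q * M%:R / 2) _ _ _) _.
  - by move=> x; case: (C x); rewrite /= ?mulr1n ?mulr0n ler_norml; apply/andP; split; lra.
  - rewrite (eq_bigr (fun x => q * P x - (C x)%:R * P x)); last by move=> x _; ring.
    by rewrite sumrB -mulr_sumr P_sum1 -sum_pred_natr mulr1 subrr.
  - by apply/andP; split; lra.
  have Q0 : 0 <= q ^+ 2 * M%:R by rewrite mulr_ge0 ?exprn_ge0.
  have : rho ^+ 2 * (q ^+ 2 * M%:R) <= q ^+ 2 * M%:R.
    by rewrite ler_piMl ?expr_le1 //; exact: ltW.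
  rewrite ler_expR.
  have -> : - (q / 8 * (q * M%:R / 2)) + 2 * (q / 8) ^+ 2 * M%:R = - (q ^+ 2 * M%:R) / 32.
    by field.
  have -> : rho ^+ 2 * q ^+ 2 * M%:R / 128 = rho ^+ 2 * (q ^+ 2 * M%:R) / 128 by ring.
  lra.
have Phigh : Pr P sum_too_high <= bound.
  apply: le_trans (chernoff_bound M P_ge0 P_sum1 (lam := rho * q / 16)
    (rho * q * M%:R / 4) centred_bound centred_mean _) _.
    by apply/andP; split; lra.
  by rewrite ler_expR le_eqVlt; apply/orP; left; apply/eqP; field.
have Plow : Pr P sum_too_low <= bound.
  apply: le_trans (chernoff_bound M P_ge0 P_sum1 (X := fun x => - centred x)
    (lam := rho * q / 16) (rho * q * M%:R / 4) _ _ _) _.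
  - by move=> x; rewrite normrN; apply: centred_bound.
  - rewrite (eq_bigr (fun x => - (P x * centred x))) ?sumrN ?centred_mean ?oppr0 //.
    by move=> x _; rewrite mulrN.
  - by apply/andP; split; lra.
  by rewrite ler_expR le_eqVlt; apply/orP; left; apply/eqP; field.
pose bad s := [|| few_samples s, sum_too_high s | sum_too_low s].
apply: le_trans (Pr_le P_ge0 (F := bad) _) _.
  move=> s far; apply/negPn/negP; rewrite !negb_or => /and3P[n1 n2 n3].
  by move: far; rewrite ltNge class_average_close.
apply: le_trans (Pr_or P_ge0 _ _) _; apply: le_trans (lerD (lexx _) (Pr_or P_ge0 _ _)) _.
lra.
Qed.

End ClassAverage.

Section MembershipClasses.
Variables (n : nat) (i : 'I_n).

Definition mem_size j (S : {set 'I_n}) := (#|S| == j) && (i \in S).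
Definition nmem_size j (S : {set 'I_n}) := (#|S| == j) && (i \notin S).

Lemma big_mem_size_succ (V : nmodType) (g : {set 'I_n} -> V) j :
  \sum_(T | mem_size j.+1 T) g T = \sum_(S | nmem_size j S) g (i |: S).
Proof.
rewrite (reindex_onto (fun S => i |: S) (fun T => T :\ i)); last first.
  by move=> T /andP[_ iT]; rewrite setD1K.
apply: eq_bigl => S; rewrite /mem_size /nmem_size setU11 andbT.
case iS: (i \in S) => /=; last by rewrite setU1K ?iS // eqxx !andbT cardsU1 iS.
rewrite andbF; apply/negbTE/negP => /andP[_ /eqP eqS].
by move: iS; rewrite -eqS setD11.
Qed.

Lemma card_mem_size_succ j :
  #|[set T | mem_size j.+1 T]| = #|[set S | nmem_size j S]|.
Proof.
rewrite !cardsE -!sum1_card.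
exact: (big_mem_size_succ (fun _ => 1%N)).
Qed.

Lemma card_nmem_size j : #|[set S | nmem_size j S]| = 'C(n.-1, j).
Proof.
have card_Di : #|[set: 'I_n] :\ i| = n.-1.
  by rewrite -[n in RHS]card_ord -cardsT (cardsD1 i [set: 'I_n]) in_setT.
rewrite -card_Di -cards_draws; apply: eq_card => S.
by rewrite !inE subsetD1 subsetT andbC.
Qed.

Lemma marg_exp_split (R : realType) m (f : {set 'I_n} -> R) :
  marg_exp m f i =
    (\sum_(T | mem_size m.+1 T) f T) / #|[set T | mem_size m.+1 T]|%:R
  - (\sum_(S | nmem_size m S) f S) / #|[set S | nmem_size m S]|%:R.
Proof.
by rewrite /marg_exp sumrB mulrBl (big_mem_size_succ f) card_mem_size_succ.
Qed.

End MembershipClasses.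

Section SubsetSampling.
Variables (R : realType) (n m k : nat).
Hypothesis m_lt_n : (m < n)%N.
Hypothesis k_le_n : (k <= n)%N.

Lemma unif_size_ge0 j (S : {set 'I_n}) : 0 <= unif_size j S :> R.
Proof. exact: divr_ge0. Qed.

Lemma sum_unif_size (C : pred {set 'I_n}) j :
  (forall S, C S -> #|S| = j) ->
  \sum_(S | C S) unif_size j S = #|[set S | C S]|%:R / 'C(n, j)%:R :> R.
Proof.
move=> CS; rewrite card_set_natr mulr_suml (sum_pred_natr C).
apply: eq_bigr => S _; case CS' : (C S); last by rewrite !mul0r.
by rewrite /unif_size (CS _ CS') eqxx /= mul1r.
Qed.

Lemma unif_size_sum1 j : (j <= n)%N -> \sum_(S : {set 'I_n}) unif_size j S = 1 :> R.
Proof.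
move=> jn; rewrite /unif_size -mulr_suml.
rewrite -(card_set_natr _ (fun S : {set 'I_n} => #|S| == j)) card_draws card_ord.
by rewrite divff // pnatr_eq0 -lt0n bin_gt0.
Qed.

Lemma dsub_ge0 (S : {set 'I_n}) : 0 <= dsub m k S :> R.
Proof.
by rewrite /dsub; do 2?apply: addr_ge0; apply: mulr_ge0; rewrite ?invr_ge0 ?ler0n ?unif_size_ge0.
Qed.

Lemma dsub_sum1 : \sum_(S : {set 'I_n}) dsub m k S = 1 :> R.
Proof.
rewrite /dsub !big_split /= -!mulr_sumr !unif_size_sum1 //; first by field.
exact: ltnW.
Qed.

Lemma dsub_eq_card (S T : {set 'I_n}) : #|S| = #|T| -> dsub m k S = dsub m k T :> R.
Proof. by rewrite /dsub /unif_size => ->. Qed.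

Lemma unif_size_le_dsub j (S : {set 'I_n}) :
  (j == m) || (j == m.+1) -> unif_size j S / 3 <= dsub m k S :> R.
Proof.
have u0 := unif_size_ge0; rewrite /dsub.
by case/orP => /eqP ->; have := u0 k S; have := u0 m S; have := u0 m.+1 S; lra.
Qed.

Let n_gt0 : (0 < n)%N. Proof. exact: leq_ltn_trans m_lt_n. Qed.

Lemma unif_size_mem_mass (i : 'I_n) :
  \sum_(S | mem_size i m.+1 S) unif_size m.+1 S = m.+1%:R / n%:R :> R.
Proof.
rewrite sum_unif_size; last by move=> S /andP[/eqP].
rewrite card_mem_size_succ card_nmem_size; apply/eqP.
rewrite eqr_div ?pnatr_eq0 -?lt0n ?bin_gt0 // -!natrM eqr_nat.
by rewrite mulnC mul_bin_diag.
Qed.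

Lemma unif_size_nmem_mass (i : 'I_n) :
  \sum_(S | nmem_size i m S) unif_size m S = (n - m)%:R / n%:R :> R.
Proof.
rewrite sum_unif_size; last by move=> S /andP[/eqP].
rewrite card_nmem_size; apply/eqP.
rewrite eqr_div ?pnatr_eq0 -?lt0n ?bin_gt0 ?(ltnW m_lt_n) // -!natrM eqr_nat.
by rewrite mulnC mul_bin_down.
Qed.

Lemma mul3n_ge1 (j : nat) (q : R) :
  (0 < j)%N -> j%:R / n%:R / 3 <= q -> 1 <= 3 * n%:R * q.
Proof.
move=> j0 jq; have n0 : 0 < n%:R :> R by rewrite ltr0n.
have c0 : 0 <= 3 * n%:R :> R by apply: mulr_ge0; rewrite ?ler0n.
apply: le_trans (ler_wpM2l c0 jq) => {c0}.
have -> : 3 * n%:R * (j%:R / n%:R / 3) = j%:R :> R by field; rewrite gt_eqF.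
by rewrite ler1n.
Qed.

Lemma dsub_mem_size_mass (i : 'I_n) :
  1 <= 3 * n%:R * \sum_(S | mem_size i m.+1 S) dsub m k S :> R.
Proof.
apply: (@mul3n_ge1 m.+1) => //.
rewrite -(unif_size_mem_mass i) mulr_suml; apply: ler_sum => S _.
by apply: unif_size_le_dsub; rewrite eqxx orbT.
Qed.

Lemma dsub_nmem_size_mass (i : 'I_n) :
  1 <= 3 * n%:R * \sum_(S | nmem_size i m S) dsub m k S :> R.
Proof.
apply: (@mul3n_ge1 (n - m)); first by rewrite subn_gt0.
rewrite -(unif_size_nmem_mass i) mulr_suml; apply: ler_sum => S _.
by apply: unif_size_le_dsub; rewrite eqxx.
Qed.

End SubsetSampling.

Section Estimates.
Variables (R : realType) (n m k M : nat) (f : {set 'I_n} -> R) (F eps rho : R).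
Hypothesis m_lt_n : (m < n)%N.
Hypothesis k_le_n : (k <= n)%N.
Hypothesis f_bounded : forall S, 0 <= f S <= F.
Hypothesis F_gt0 : 0 < F.
Hypothesis rho_gt0 : 0 < rho.
Hypothesis rho_le1 : rho <= 1.
Hypothesis rhoF_le_eps : rho * F <= eps.
Hypothesis M_large : 2304 * n%:R ^+ 3 <= rho ^+ 2 * M%:R.

Let estimate_far (C : pred {set 'I_n}) (s : {ffun 'I_M -> {set 'I_n}}) :=
  eps / 2 < `|(\sum_(j < M | C (s j)) f (s j)) / #|[set j | C (s j)]|%:R
              - (\sum_(S | C S) f S) / #|[set S | C S]|%:R|.

Lemma Pr_class_estimate_far (C : pred {set 'I_n}) l :
  (forall S, C S -> #|S| = l) -> (0 < #|[set S | C S]|)%N ->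
  1 <= 3 * n%:R * \sum_(S | C S) dsub (R:=R) m k S ->
  Pr (dsub (R:=R) m k) (estimate_far C) <= 3 * expR (- (2 * n%:R)).
Proof.
move=> C_size C_ne q_large.
set q := \sum_(S | C S) dsub (R:=R) m k S in q_large.
have n0 : 0 <= n%:R :> R := ler0n _ n.
have exponent : 2 * n%:R <= rho ^+ 2 * q ^+ 2 * M%:R / 128.
  have h1 : q ^+ 2 * (2304 * n%:R ^+ 3) <= q ^+ 2 * (rho ^+ 2 * M%:R).
    by apply: ler_wpM2l; rewrite ?sqr_ge0.
  have h2 : 2 * n%:R * 1 <= 2 * n%:R * (3 * n%:R * q) ^+ 2.
    by apply: ler_wpM2l; [lra | apply: exprn_ege1].
  have -> : rho ^+ 2 * q ^+ 2 * M%:R / 128 = q ^+ 2 * (rho ^+ 2 * M%:R) / 128 by ring.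
  have e : q ^+ 2 * (2304 * n%:R ^+ 3) = 128 * (2 * n%:R * (3 * n%:R * q) ^+ 2) by ring.
  lra.
have far_le : forall x : R, eps / 2 < x -> rho * F / 2 < x.
  by move=> x hx; have := rhoF_le_eps; lra.
have dsub_const x y : C x -> C y -> dsub m k x = dsub m k y :> R.
  by move=> /C_size hx /C_size hy; apply: dsub_eq_card; rewrite hx hy.
have far_bound := Pr_class_average_far M (@dsub_ge0 R n m k) (dsub_sum1 R m_lt_n k_le_n)
  dsub_const C_ne f_bounded F_gt0 rho_gt0 rho_le1.
apply: le_trans (Pr_le (@dsub_ge0 R n m k) (fun s => far_le _)) (le_trans far_bound _).
by rewrite ler_pM2l // ler_expR lerN2.
Qed.

Lemma Pr_estimates_close :
  1 - 6 * n%:R * expR (- (2 * n%:R)) <=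
  prob_samples (R:=R) m k (fun s : {ffun 'I_M -> {set 'I_n}} =>
    [forall i, `|vhat m f s i - marg_exp m f i| <= eps]).
Proof.
have card_nmem (i : 'I_n) : (0 < #|[set S | nmem_size i m S]|)%N.
  by rewrite card_nmem_size bin_gt0 -ltnS (ltn_predK m_lt_n).
have far_mem (i : 'I_n) :
    Pr (dsub (R:=R) m k) (estimate_far (mem_size i m.+1)) <= 3 * expR (- (2 * n%:R)).
  apply: (@Pr_class_estimate_far _ m.+1); first by move=> S /andP[/eqP].
    by rewrite card_mem_size_succ.
  exact: dsub_mem_size_mass.
have far_nmem (i : 'I_n) :
    Pr (dsub (R:=R) m k) (estimate_far (nmem_size i m)) <= 3 * expR (- (2 * n%:R)).
  apply: (@Pr_class_estimate_far _ m); first by move=> S /andP[/eqP].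
    exact: card_nmem.
  exact: dsub_nmem_size_mass.
pose bad s := [exists i, estimate_far (mem_size i m.+1) s || estimate_far (nmem_size i m) s].
have Pr_bad : Pr (dsub (R:=R) m k) bad <= 6 * n%:R * expR (- (2 * n%:R)).
  apply: le_trans (Pr_exists (@dsub_ge0 R n m k) _) _.
  apply: le_trans (ler_sum _ (fun i _ => le_trans (Pr_or (@dsub_ge0 R n m k) _ _)
    (lerD (far_mem i) (far_nmem i)))) _.
  by rewrite sumr_const card_ord -mulr_natr le_eqVlt; apply/orP; left; apply/eqP; ring.
have good : forall s, predC bad s -> [forall i, `|vhat m f s i - marg_exp m f i| <= eps].
  move=> s; rewrite /= negb_exists => /forallP good_s; apply/forallP => i.
  move: (good_s i); rewrite negb_or /estimate_far -!leNgt => /andP[close_mem close_nmem].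
  rewrite /vhat (marg_exp_split i) /mem_size /nmem_size in close_mem close_nmem *.
  have -> : forall x1 x2 a1 a2 : R, x1 - x2 - (a1 - a2) = (x1 - a1) - (x2 - a2).
    by move=> *; ring.
  by apply: le_trans (ler_normB _ _) _; lra.
apply: le_trans (Pr_le (@dsub_ge0 R n m k) good).
by rewrite Pr_predC ?dsub_sum1 // lerD2l lerN2.
Qed.

End Estimates.

Lemma horner_le_monomial (R : realType) (p : {poly R}) :
  exists K D : nat, (0 < K)%N /\ forall x : R, 1 <= x -> p.[x] <= K%:R * x ^+ D.
Proof.
have S0 : 0 <= \sum_(i < size p) `|p`_i| by apply: sumr_ge0.
exists (Num.bound (\sum_(i < size p) `|p`_i|)).+1, (size p); split=> // x x1.
have x0 : 0 <= x by lra.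
rewrite horner_coef.
apply: le_trans (_ : _ <= \sum_(i < size p) `|p`_i| * x ^+ size p) _.
  apply: ler_sum => i _; apply: le_trans (ler_norm _) _.
  rewrite normrM (ger0_norm (exprn_ge0 _ x0)); apply: ler_wpM2l => //.
  by apply: ler_weXn2l => //; apply: ltnW.
rewrite -mulr_suml; apply: ler_wpM2r; first exact: exprn_ge0.
by apply: le_trans (ltW (archi_boundP S0)) _; rewrite ler_nat.
Qed.

Lemma mul_expRN2_le (R : realType) (x : R) : x * expR (- (2 * x)) <= expR (- x).
Proof.
have x_le : x * expR (- x) <= 1.
  rewrite -(expRxMexpNx_1 x); apply: ler_wpM2r; first exact: expR_ge0.
  by have := expR_ge1Dx x; lra.
have -> : - (2 * x) = - x + - x by ring.
rewrite expRD mulrA -[X in _ <= X]mul1r.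
by apply: ler_wpM2r x_le; exact: expR_ge0.
Qed.

Lemma exists_precision_ratio (R : realType) (F eps pn L : R) :
  0 < F -> 0 < pn -> F / pn <= eps -> pn <= L -> 1 <= L ->
  exists rho, [/\ 0 < rho, rho <= 1, rho * F <= eps & 1 <= rho * L].
Proof.
move=> F0 pn0 eps_ge pn_le L1.
have eps_gt0 : 0 < eps by apply: lt_le_trans eps_ge; exact: divr_gt0.
exists (Num.min 1 (eps / F)); split.
- by rewrite lt_min ltr01 divr_gt0.
- by rewrite ge_min lexx.
- by rewrite -ler_pdivlMr // ge_min lexx orbT.
have [_ | _] := lerP 1 (eps / F); first by rewrite mul1r.
rewrite mulrAC ler_pdivlMr // mul1r.
apply: le_trans (ler_wpM2l (ltW eps_gt0) pn_le).
by rewrite -ler_pdivrMr.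
Qed.

Lemma sample_size_large (R : realType) (n K D M : nat) (rho : R) :
  1 <= rho * (K%:R * n%:R ^+ D) -> (2304 * K ^ 2 * n ^ (3 + 2 * D) <= M)%N ->
  2304 * n%:R ^+ 3 <= rho ^+ 2 * M%:R.
Proof.
set L := K%:R * n%:R ^+ D => rhoL; rewrite -(ler_nat R).
have -> : (2304 * K ^ 2 * n ^ (3 + 2 * D))%:R = 2304 * n%:R ^+ 3 * L ^+ 2 :> R.
  by rewrite !(natrM, natrX) exprD mulnC exprM /L; ring.
move=> /(ler_wpM2l (sqr_ge0 rho)).
have n3 : 0 <= 2304 * n%:R ^+ 3 :> R by rewrite mulr_ge0 ?exprn_ge0.
have : 2304 * n%:R ^+ 3 * 1 <= 2304 * n%:R ^+ 3 * (rho * L) ^+ 2.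
  by apply: ler_wpM2l => //; apply: exprn_ege1.
have -> : rho ^+ 2 * (2304 * n%:R ^+ 3 * L ^+ 2) = 2304 * n%:R ^+ 3 * (rho * L) ^+ 2 by ring.
lra.
Qed.

Lemma prob_samples_exact_of_eq0 (R : realType) (n m k M : nat) (f : {set 'I_n} -> R)
    (eps : R) :
  (m < n)%N -> (k <= n)%N -> (forall S, f S = 0) -> 0 <= eps ->
  prob_samples (R:=R) m k (fun s : {ffun 'I_M -> {set 'I_n}} =>
    [forall i, `|vhat m f s i - marg_exp m f i| <= eps]) = 1.
Proof.
move=> m_lt_n k_le_n f_eq0 eps0.
rewrite -(Pr_predT M (dsub_sum1 R m_lt_n k_le_n)); apply: eq_bigl => s.
apply/forallP => i; rewrite /vhat /marg_exp !big1 ?mul0r ?subrr ?normr0 // => *.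
by rewrite ?f_eq0 ?subrr.
Qed.

Theorem lemma19 (R : realType) (p : {poly R}) :
  exists (c d : nat) (C : R),
  forall (m : nat), (2 <= m)%N ->
  forall (k : nat), (1 <= k <= m ^ 2)%N ->
  forall (f : {set 'I_(m ^ 2)} -> R),
    monotone_set f -> 0 <= f set0 ->
    0 < p.[(m ^ 2)%:R] ->
  forall eps : R, f setT / p.[(m ^ 2)%:R] <= eps ->
  forall M : nat, (c * (m ^ 2) ^ d <= M)%N ->
    1 - C * expR (- (m ^ 2)%:R) <=
    prob_samples m k
      (fun s : {ffun 'I_M -> {set 'I_(m ^ 2)}} =>
         [forall i : 'I_(m ^ 2), `|vhat m f s i - marg_exp m f i| <= eps]).
Proof.
have [K [D [K_gt0 p_le]]] := horner_le_monomial p.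
exists (2304 * K ^ 2)%N, (3 + 2 * D)%N, 6.
move=> m m2 k /andP[_ k_le] f f_mono f0 p_pos eps eps_ge M M_ge.
have m_lt : (m < m ^ 2)%N by rewrite -mulnn ltn_Pmull // ltnW.
have f_bounded S : 0 <= f S <= f setT.
  by rewrite (le_trans f0) ?f_mono ?sub0set ?subsetT.
have n_ge1 : 1 <= (m ^ 2)%:R :> R by rewrite ler1n (leq_ltn_trans _ m_lt).
have [fT0 | fT_neq0] := eqVneq (f setT) 0.
  have f_eq0 S : f S = 0.
    by apply/eqP; rewrite eq_le -{1}fT0; case/andP: (f_bounded S) => -> ->.
  have eps0 : 0 <= eps by rewrite (le_trans _ eps_ge) // fT0 mul0r.
  by rewrite prob_samples_exact_of_eq0 // lerBlDr lerDl mulr_ge0 ?expR_ge0.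
have F_gt0 : 0 < f setT by rewrite lt0r fT_neq0; case/andP: (f_bounded setT).
have L_ge1 : 1 <= K%:R * (m ^ 2)%:R ^+ D :> R by rewrite mulr_ege1 ?exprn_ege1 // ler1n.
have [rho [rho_gt0 rho_le1 rhoF rhoL]] :=
  exists_precision_ratio F_gt0 p_pos eps_ge (p_le _ n_ge1) L_ge1.
apply: le_trans (Pr_estimates_close m_lt k_le f_bounded F_gt0 rho_gt0 rho_le1 rhoF
  (sample_size_large rhoL M_ge)).
by rewrite lerD2l lerN2 -mulrA ler_pM2l // mul_expRN2_le.
Qed.
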